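(* Let $F(x,y)=ax^4+bx^3y+cx^2y^2+dxy^3+ey^4$ be an integral binary quartic form with $a\neq0$ and $b\neq 0$. Let $p>3$ be a prime with $\nu_p(b)>0$. Then $R(F)$ is dense in $\mathbb{Q}_p$ if one of the following holds: (1) $p\equiv 1\pmod 3$, $a^2c^2+12a^3e\equiv 0\pmod p$, and $8a^3c^3+27a^4d^2$ is a cubic non-residue modulo $p$; (2) $a^2c^2+12a^3e\not\equiv 0\pmod p$ and $s_{p+1}\equiv a^2c^2-4a^3e\pmod p$, where the sequence $(s_n)$ is defined by $s_0=3$, $s_1=-2ac$, $s_2=2a^2c^2+8a^3e$, and $s_{n+3}=-2acs_{n+2}+(4a^3e-a^2c^2)s_{n+1}+a^4d^2s_n$ for $n\geq 0$.
   Context: $\nu_p$ is the $p$-adic valuation. $R(F)=\{F(x_1,y_1)/F(x_2,y_2) : x_i,y_i\in\mathbb{Z},\ F(x_2,y_2)\neq 0\}$, and density is in the $p$-adic topology. *)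

From mathcomp Require Import all_boot all_order all_algebra.
Set Implicit Arguments. Unset Strict Implicit. Unset Printing Implicit Defensive.
Import Order.TTheory GRing.Theory Num.Theory.
Local Open Scope ring_scope.

Definition quartic (a b c d e x y : int) : int :=
  a * x ^+ 4 + b * x ^+ 3 * y + c * x ^+ 2 * y ^+ 2 + d * x * y ^+ 3 + e * y ^+ 4.

Definition RF (a b c d e : int) (r : rat) : Prop :=
  exists x1 y1 x2 y2 : int,
    quartic a b c d e x2 y2 != 0 /\
    r = (quartic a b c d e x1 y1)%:~R / (quartic a b c d e x2 y2)%:~R.

(* p-adic valuation of a nonzero rational (numq/denq is the reduced form);
   the value at 0 is irrelevant (nu_p(0) = +oo is handled separately). *)
Definition nu_p (p : nat) (q : rat) : int :=
  (logn p `|numq q|%N)%:Z - (logn p `|denq q|%N)%:Z.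

(* S ⊆ Q is dense in Q_p (p-adic topology).  Since Q is dense in Q_p, this
   is equivalent to: every rational q is a p-adic limit of elements of S,
   i.e. for every q and every k there is r in S with |r - q|_p <= p^-k. *)
Definition dense_in_Qp (p : nat) (S : rat -> Prop) : Prop :=
  forall (q : rat) (k : int), exists r : rat, S r /\ (r = q \/ k <= nu_p p (r - q)).

Fixpoint s_triple (a c d e : int) (n : nat) : int * int * int :=
  match n with
  | 0%N => (3, - (2 * a * c), 2 * a ^+ 2 * c ^+ 2 + 8 * a ^+ 3 * e)
  | n'.+1 =>
      let: (x, y, z) := s_triple a c d e n' in
      (y, z, - (2 * a * c) * z + (4 * a ^+ 3 * e - a ^+ 2 * c ^+ 2) * y
               + a ^+ 4 * d ^+ 2 * x)
  end.

Definition s_seq (a c d e : int) (n : nat) : int := (s_triple a c d e n).1.1.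

Definition cubic_residue (p : nat) (t : int) : Prop :=
  exists u : int, (p%:Z %| u ^+ 3 - t)%Z.

From mathcomp Require Import all_boot all_order all_algebra all_field.
From mathcomp Require Import ring zify.
Import Order.TTheory GRing.Theory Num.Theory.
Set Implicit Arguments. Unset Strict Implicit. Unset Printing Implicit Defensive.
Local Open Scope ring_scope.

(* Write g(x) = F(x, 1).  If g has a simple root modulo p, Hensel lifting solves
   g(x) = T (mod p^N) for every T divisible by p; taking T = p n and T = p D makes
   g(x1)/g(x2) p-adically close to any rational n/D.
   Since p | b, a^3 g(x) = h(a x) (mod p) for the depressed quartic
   h(y) = y^4 + P y^2 + Q y + R with P = ac, Q = a^2 d, R = a^3 e, so we need a
   simple root of h in F_p.  Let a_0, ..., a_3 be the roots of h in a splitting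
   field and phi the Frobenius.  The three pairings {{i,j},{k,l}} of the roots give
   the roots t_k = (a_i + a_j)^2 of the resolvent cubic
   res = X^3 + 2P X^2 + (P^2 - 4R) X - Q^2, whose power sums are the s_n.
   Each hypothesis prevents phi from fixing a t_k.  Under (1) a fixed t_k = x lies
   in F_p, and as P^2 + 12R = 0, 27 res(x) = (3x + 2P)^3 - (8P^3 + 27Q^2) would
   make 8P^3 + 27Q^2 a cube.  Under (2), s_(p+1) = sum_k t_k phi(t_k) equals
   e_2(t_0, t_1, t_2); with P^2 + 12R <> 0 this rules out phi fixing one t_k and
   fixing or swapping the other two.  A self-map of four points fixing none of the
   three pairings has a fixed point, so phi fixes a root a_i of h, and a_i is
   simple, since a_i = a_j would make (a_i + a_j)^2 = 4 a_i^2 a fixed t_k. *)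

(** * Hensel lifting and p-adic density *)

Lemma dvdz_horner_taylor (g : {poly int}) (x t : int) :
  (t ^+ 2 %| g.[x + t] - g.[x] - g^`().[x] * t)%Z.
Proof.
elim/poly_ind: g => [|g c IHg]; first by rewrite deriv0 !horner0 mul0r !subr0.
have -> : (g * 'X + c%:P).[x + t] - (g * 'X + c%:P).[x] - (g * 'X + c%:P)^`().[x] * t
    = (x + t) * (g.[x + t] - g.[x] - g^`().[x] * t) + g^`().[x] * t ^+ 2.
  by rewrite derivMXaddC !hornerMXaddC hornerD hornerM hornerX; ring.
by apply: rpredD; apply: dvdz_mull.
Qed.

Lemma dvdz_horner_sub (g : {poly int}) (x y : int) : (x - y %| g.[x] - g.[y])%Z.
Proof.
have := dvdz_horner_taylor g y (x - y); rewrite [y + _]addrC subrK expr2 => H.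
have -> : g.[x] - g.[y] = g.[x] - g.[y] - g^`().[y] * (x - y) + g^`().[y] * (x - y)
  by rewrite subrK.
apply: rpredD; last exact: dvdz_mull.
exact: dvdz_trans (dvdz_mulr _ (dvdzz _)) H.
Qed.

Lemma hensel_lift (p : nat) (g : {poly int}) (r : int) : prime p ->
  (p%:Z %| g.[r])%Z -> ~~ (p%:Z %| g^`().[r])%Z ->
  forall N, exists2 x, (p%:Z ^+ N.+1 %| g.[x])%Z & (p%:Z %| x - r)%Z.
Proof.
move=> p_pr gr g'r; elim=> [|N [x gx xr]]; first by exists r; rewrite ?expr1 ?subrr.
have g'x : ~~ (p%:Z %| g^`().[x])%Z.
  apply: contra g'r => g'x.
  have -> : g^`().[r] = g^`().[x] - (g^`().[x] - g^`().[r]) by ring.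
  by rewrite rpredB // (dvdz_trans xr) ?dvdz_horner_sub.
have [m Em] := dvdzP gx.
have /coprimezP[[u v] /= Bez] : coprimez g^`().[x] p%:Z.
  by rewrite coprimezE coprime_sym prime_coprime.
pose t := - (m * u) * p%:Z ^+ N.+1.
have pt : (p%:Z %| t)%Z by rewrite dvdz_mull // dvdz_exp.
exists (x + t); last by rewrite addrAC rpredD.
(* Newton step: [u] inverts [g'(x)] modulo [p], so the linear term cancels [g(x)]. *)
have Elin : g.[x] + g^`().[x] * t = m * v * p%:Z ^+ N.+2.
  rewrite Em /t !exprS; transitivity (m * (p%:Z * p%:Z ^+ N) * (1 - u * g^`().[x])).
    by ring.
  by rewrite -Bez; ring.
have -> : g.[x + t] = g.[x + t] - g.[x] - g^`().[x] * t + (g.[x] + g^`().[x] * t) by ring.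
rewrite Elin; apply: rpredD; last exact: dvdz_mull (dvdzz _).
apply: dvdz_trans (dvdz_horner_taylor g x t).
rewrite /t exprMn; apply: dvdz_mull; rewrite -exprM; apply: dvdz_exp2l; lia.
Qed.

Lemma hensel_approx (p : nat) (g : {poly int}) (r T : int) : prime p ->
  (p%:Z %| g.[r])%Z -> ~~ (p%:Z %| g^`().[r])%Z -> (p%:Z %| T)%Z ->
  forall N, exists x, (p%:Z ^+ N %| g.[x] - T)%Z.
Proof.
move=> p_pr gr g'r pT N.
have gT y : (g - T%:P).[y] = g.[y] - T by rewrite hornerD hornerN hornerC.
have [||x gTx _] := @hensel_lift p (g - T%:P) r p_pr _ _ N.
- by rewrite gT rpredB.
- by rewrite derivB derivC subr0.
by exists x; rewrite -gT (dvdz_trans _ gTx) ?dvdz_exp2l.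
Qed.

Lemma logn_le_of_dvdz_sub (p N : nat) (B B0 : int) : prime p -> B0 != 0 ->
  (logn p `|B0| < N)%N -> (p%:Z ^+ N %| B - B0)%Z ->
  B != 0 /\ (logn p `|B| <= logn p `|B0|)%N.
Proof.
move=> p_pr B0_neq0 lB0 BB0; set v := logn p `|B0|.
have dvd_pv (C : int) : C != 0 -> (p%:Z ^+ v.+1 %| C)%Z = (v < logn p `|C|)%N.
  by move=> C0; rewrite dvdzE abszX pfactor_dvdn ?absz_gt0.
have nB : ~~ (p%:Z ^+ v.+1 %| B)%Z.
  apply/negP => pB; have : (p%:Z ^+ v.+1 %| B - (B - B0))%Z.
    by rewrite rpredB // (dvdz_trans _ BB0) ?dvdz_exp2l.
  by rewrite opprB addrC subrK dvd_pv // ltnn.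
have B_neq0 : B != 0 by apply: contraNneq nB => ->; exact: dvdz0.
by split=> //; rewrite leqNgt -dvd_pv.
Qed.

Lemma nu_p_ratio (p : nat) (A B : int) : A != 0 -> B != 0 ->
  nu_p p (A%:~R / B%:~R) = (logn p `|A|)%:Z - (logn p `|B|)%:Z.
Proof.
move=> A0 B0; set x : rat := A%:~R / B%:~R.
have E : numq x * B = A * denq x.
  apply: (@intr_inj rat); rewrite !intrM numqE /x.
  by rewrite mulrAC divfK // intr_eq0.
have x0 : x != 0 by rewrite mulf_neq0 ?invr_eq0 ?intr_eq0.
have := congr1 (fun z => logn p `|z|) E; rewrite /= !abszM.
rewrite !lognM ?absz_gt0 ?numq_eq0 ?denq_neq0 // => H.
rewrite /nu_p; lia.
Qed.

Lemma dense_horner_ratios (p : nat) (g : {poly int}) (r : int) : prime p ->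
  (p%:Z %| g.[r])%Z -> ~~ (p%:Z %| g^`().[r])%Z ->
  dense_in_Qp p (fun q => exists x1 x2, g.[x2] != 0 /\ q = g.[x1]%:~R / g.[x2]%:~R).
Proof.
move=> p_pr gr g'r q k; set n := numq q; set D := denq q; set be := logn p `|D|.
set N := (be + be + `|k|).+2.
(* Choose [g(x1) = p n] and [g(x2) = p D] modulo [p^N], so that g(x1)/g(x2) is close to n/D. *)
have [x1 Hx1] := hensel_approx p_pr gr g'r (dvdz_mulr n (dvdzz p)) N.
have [x2 Hx2] := hensel_approx p_pr gr g'r (dvdz_mulr D (dvdzz p)) N.
have D0 : D != 0 := denq_neq0 q.
have p0 : p%:Z != 0 by rewrite eqz_nat -lt0n prime_gt0.
have pD0 : p%:Z * D != 0 by rewrite mulf_neq0.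
have lpD : logn p `|p%:Z * D| = be.+1.
  by rewrite abszM lognM ?absz_gt0 // absz_nat logn_prime ?eqxx.
have lpDN : (logn p `|(p%:Z * D)%R| < N)%N by rewrite lpD /N; lia.
have [g2 lg2] := logn_le_of_dvdz_sub p_pr pD0 lpDN Hx2.
exists (g.[x1]%:~R / g.[x2]%:~R); split; first by exists x1, x2.
set A := g.[x1] * D - n * g.[x2]; set B := g.[x2] * D.
have B0 : B != 0 by rewrite mulf_neq0.
have Erq : g.[x1]%:~R / g.[x2]%:~R - q = A%:~R / B%:~R :> rat.
  rewrite -{1}(divq_num_den q) -/n -/D /A /B !intrM intrB !intrM.
  by field; rewrite ?intr_eq0 ?D0.
have [A0|A0] := eqVneq A 0.
  by left; apply/eqP; rewrite -subr_eq0 Erq A0 mul0r.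
right; rewrite Erq nu_p_ratio //.
have lA : (N <= logn p `|A|)%N.
  rewrite -pfactor_dvdn ?absz_gt0 // -(abszX N p%:Z) -dvdzE.
  have -> : A = (g.[x1] - p%:Z * n) * D - n * (g.[x2] - p%:Z * D) by rewrite /A; ring.
  by apply: rpredB; [apply: dvdz_mulr | apply: dvdz_mull].
have lB : (logn p `|B| <= be.+1 + be)%N.
  by rewrite /B abszM lognM ?absz_gt0 // leq_add2r -lpD.
rewrite /N in lA; lia.
Qed.

(** * Depressed quartics and their resolvent cubic *)

Definition depressed_quartic (K : nzRingType) (P Q R : K) : {poly K} :=
  'X^4 + P%:P * 'X^2 + Q%:P * 'X + R%:P.

Definition resolvent (K : nzRingType) (P Q R : K) : {poly K} :=
  'X^3 + (2 * P)%:P * 'X^2 + (P ^+ 2 - 4 * R)%:P * 'X - (Q ^+ 2)%:P.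

Section PolyFacts.
Variable K : comNzRingType.
Implicit Types P Q R x : K.

Lemma horner_depressed_quartic P Q R x :
  (depressed_quartic P Q R).[x] = x ^+ 4 + P * x ^+ 2 + Q * x + R.
Proof. by rewrite /depressed_quartic !hornerE; ring. Qed.

Lemma deriv_depressed_quartic P Q R x :
  (depressed_quartic P Q R)^`().[x] = 4 * x ^+ 3 + 2 * P * x + Q.
Proof. by rewrite /depressed_quartic !derivE !hornerE /=; ring. Qed.

Lemma horner_resolvent P Q R x :
  (resolvent P Q R).[x] = x ^+ 3 + 2 * P * x ^+ 2 + (P ^+ 2 - 4 * R) * x - Q ^+ 2.
Proof. by rewrite /resolvent !hornerE; ring. Qed.

Lemma map_depressed_quartic (K' : comNzRingType) (f : {rmorphism K -> K'}) P Q R :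
  map_poly f (depressed_quartic P Q R) = depressed_quartic (f P) (f Q) (f R).
Proof. by rewrite /depressed_quartic !rmorphD !rmorphXn !rmorphM /= !map_polyC map_polyX. Qed.

Lemma map_resolvent (K' : comNzRingType) (f : {rmorphism K -> K'}) P Q R :
  map_poly f (resolvent P Q R) = resolvent (f P) (f Q) (f R).
Proof.
by rewrite /resolvent !(rmorphB, rmorphD, rmorphXn, rmorphM) /= !map_polyC map_polyX /= rmorph1.
Qed.

End PolyFacts.

Lemma polyseq_depressed_quartic (K : nzRingType) (P Q R : K) :
  depressed_quartic P Q R = [:: R; Q; P; 0; 1] :> seq K.
Proof.
have -> : depressed_quartic P Q R = Poly [:: R; Q; P; 0; 1].
  apply/polyP => i; rewrite coef_Poly /depressed_quartic !coefE.
  by case: i => [|[|[|[|[|i]]]]] /=; rewrite ?(mulr0, mulr1, addr0, add0r, nth_nil).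
by rewrite (@PolyK _ 0) //= oner_eq0.
Qed.

Lemma resolvent_cube (K : comNzRingType) (P Q R x : K) :
  27 * (resolvent P Q R).[x] =
  (3 * x + 2 * P) ^+ 3 - (8 * P ^+ 3 + 27 * Q ^+ 2) - 9 * (P ^+ 2 + 12 * R) * x.
Proof. by rewrite horner_resolvent; ring. Qed.

(* [pairing i j] indexes the partition {{i, j}, {k, l}} of {0, 1, 2, 3}:
   it is the partner of 0, minus one. *)
Definition pairing (i j : nat) : nat :=
  if i == 0%N then j.-1 else if j == 0%N then i.-1 else (5 - i - j)%N.

Lemma fixed_point_or_stable_pairing (s : nat -> nat) :
  (forall i, i < 4 -> s i < 4)%N ->
  (exists2 i, i < 4 & s i = i)%N \/
  exists i j, [/\ i < 4, j < 4, i != j, s i != s j & pairing (s i) (s j) = pairing i j]%N.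
Proof.
move=> s4; pose I4 := iota 0 4.
pose good f := has (fun i => f i == i) I4 || has (fun i => has (fun j =>
  [&& i != j, f i != f j & pairing (f i) (f j) == pairing i j]) I4) I4.
have all_good : all (fun a => all (fun b => all (fun c => all (fun d =>
  good (nth 0 [:: a; b; c; d])) I4) I4) I4) I4 by vm_compute.
have I4s i : (i < 4)%N -> s i \in I4 by move=> /s4; rewrite mem_iota.
have : good s :=
  allP (allP (allP (allP all_good _ (I4s 0 isT)) _ (I4s 1 isT)) _ (I4s 2 isT)) _ (I4s 3 isT).
case/orP=> [/hasP[i] | /hasP[i Ii /hasP[j Ij]]].
  by rewrite mem_iota => Ii /eqP; left; exists i.
rewrite !mem_iota in Ii Ij; case/and3P=> ij sij /eqP pij.
by right; exists i, j.
Qed.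

Lemma pairing_lt3 i j : (i < 4)%N -> (j < 4)%N -> i != j -> (pairing i j < 3)%N.
Proof. by case: i => [|[|[|[|]]]] //; case: j => [|[|[|[|]]]]. Qed.

Lemma power_sum3_rec (K : comNzRingType) (x y z : K) n :
  x ^+ n.+3 + y ^+ n.+3 + z ^+ n.+3 =
  (x + y + z) * (x ^+ n.+2 + y ^+ n.+2 + z ^+ n.+2)
  - (x * y + x * z + y * z) * (x ^+ n.+1 + y ^+ n.+1 + z ^+ n.+1)
  + x * y * z * (x ^+ n + y ^+ n + z ^+ n).
Proof. by rewrite !exprS; ring. Qed.

Section FourRootsSumZero.
Variables (K : comNzRingType) (a0 a1 a2 : K).

(* The roots of a quartic without cubic term; [P4], [Q4], [R4] are its other coefficients. *)
Definition roots4 : seq K := [:: a0; a1; a2; - (a0 + a1 + a2)].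
Local Notation r i := (nth 0 roots4 i).

Definition P4 : K := r 0 * r 1 + r 0 * r 2 + r 0 * r 3 + r 1 * r 2 + r 1 * r 3 + r 2 * r 3.
Definition Q4 : K := - (r 0 * r 1 * r 2 + r 0 * r 1 * r 3 + r 0 * r 2 * r 3 + r 1 * r 2 * r 3).
Definition R4 : K := r 0 * r 1 * r 2 * r 3.
(* As the roots sum to zero, [(r 0 + r k)^2 = (r i + r j)^2] for the complementary pair. *)
Definition resolvent_root (k : nat) : K := (r 0 + r k.+1) ^+ 2.
Definition resolvent_roots : seq K := [seq resolvent_root k | k <- iota 0 3].
Local Notation t k := (resolvent_root k).

Lemma prod_roots4 : \prod_(z <- roots4) ('X - z%:P) = depressed_quartic P4 Q4 R4.
Proof.
rewrite /depressed_quartic /P4 /Q4 /R4 /= !big_cons big_nil.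
rewrite !(polyCD, polyCM, polyCN); ring.
Qed.

Lemma prod_resolvent_roots : \prod_(z <- resolvent_roots) ('X - z%:P) = resolvent P4 Q4 R4.
Proof.
rewrite /resolvent /resolvent_root /P4 /Q4 /R4 /= !big_cons big_nil.
rewrite !(polyCD, polyCM, polyCN, polyCB, rmorphXn, rmorph_nat); ring.
Qed.

Lemma sqr_add_roots4 i j : (i < 4)%N -> (j < 4)%N -> i != j ->
  (r i + r j) ^+ 2 = t (pairing i j).
Proof.
by case: i => [|[|[|[|]]]] //; case: j => [|[|[|[|]]]] // _ _ _; rewrite /resolvent_root /=; ring.
Qed.

Lemma resolvent_roots_sum : t 0 + t 1 + t 2 = - (2 * P4).
Proof. by rewrite /resolvent_root /P4 /=; ring. Qed.

Lemma resolvent_roots_e2 : t 0 * t 1 + t 0 * t 2 + t 1 * t 2 = P4 ^+ 2 - 4 * R4.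
Proof. by rewrite /resolvent_root /P4 /R4 /=; ring. Qed.

Lemma resolvent_roots_power_sum (S : nat -> K) :
  S 0%N = 3 -> S 1%N = - (2 * P4) -> S 2%N = 2 * P4 ^+ 2 + 8 * R4 ->
  (forall n, S n.+3 = - (2 * P4) * S n.+2 + (4 * R4 - P4 ^+ 2) * S n.+1 + Q4 ^+ 2 * S n) ->
  forall n, S n = t 0 ^+ n + t 1 ^+ n + t 2 ^+ n.
Proof.
move=> S0 S1 S2 Srec n.
suff [] : [/\ S n = t 0 ^+ n + t 1 ^+ n + t 2 ^+ n,
  S n.+1 = t 0 ^+ n.+1 + t 1 ^+ n.+1 + t 2 ^+ n.+1 &
  S n.+2 = t 0 ^+ n.+2 + t 1 ^+ n.+2 + t 2 ^+ n.+2] by [].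
elim: n => [|n [IH0 IH1 IH2]].
  by rewrite S0 S1 S2 /resolvent_root /P4 /R4 /=; split; ring.
split=> //; rewrite power_sum3_rec Srec -IH0 -IH1 -IH2 resolvent_roots_sum resolvent_roots_e2.
have -> : t 0 * t 1 * t 2 = Q4 ^+ 2 by rewrite /resolvent_root /Q4 /=; ring.
by ring.
Qed.

Lemma deriv_quartic_roots4 i : (i < 4)%N ->
  (depressed_quartic P4 Q4 R4)^`().[r i] = \prod_(j <- iota 0 4 | j != i) (r i - r j).
Proof.
move=> i4; rewrite deriv_depressed_quartic big_mkcond /= !big_cons big_nil /P4 /Q4 /=.
by case: i i4 => [|[|[|[|]]]] //= _; ring.
Qed.

End FourRootsSumZero.

Lemma deriv_quartic_roots4_neq0 (K : idomainType) (a0 a1 a2 : K) i : (i < 4)%N ->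
  let r := nth 0 (roots4 a0 a1 a2) in
  (forall j, (j < 4)%N -> j != i -> r j != r i) ->
  (depressed_quartic (P4 a0 a1 a2) (Q4 a0 a1 a2) (R4 a0 a1 a2))^`().[r i] != 0.
Proof.
move=> i4 r distinct; rewrite deriv_quartic_roots4 // prodf_seq_neq0.
by apply/allP => j; rewrite mem_iota => /= j4; apply/implyP => ji; rewrite subr_eq0 eq_sym distinct.
Qed.

Lemma roots_of_depressed_quartic (K : comNzRingType) (P Q R : K) (rs : seq K) :
  depressed_quartic P Q R = \prod_(z <- rs) ('X - z%:P) ->
  exists a0 a1 a2, [/\ rs = roots4 a0 a1 a2, P4 a0 a1 a2 = P, Q4 a0 a1 a2 = Q & R4 a0 a1 a2 = R].
Proof.
move=> Hrs; have /eqP : size (depressed_quartic P Q R) = (size rs).+1.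
  by rewrite Hrs size_prod_XsubC.
rewrite polyseq_depressed_quartic eqSS.
case: rs Hrs => [|b0 [|b1 [|b2 [|b3 []]]]] // Hrs _.
have : (depressed_quartic P Q R)`_3 = - (b0 + b1 + b2 + b3).
  by rewrite Hrs coefPn_prod_XsubC // !big_cons big_nil addr0 !addrA.
rewrite polyseq_depressed_quartic /= => /eqP; rewrite eq_sym oppr_eq0 => /eqP sum0.
have b3E : b3 = - (b0 + b1 + b2) by apply/eqP; rewrite -addr_eq0 addrC sum0.
subst b3.
exists b0, b1, b2; move: Hrs; rewrite -/(roots4 b0 b1 b2) prod_roots4.
move=> /(congr1 polyseq); rewrite !polyseq_depressed_quartic.
by case=> -> -> ->.
Qed.

(** * The Frobenius acting on the roots *)

Lemma perm_eq_pair (T : eqType) (a b c d : T) :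
  perm_eq [:: a; b] [:: c; d] -> (a = c /\ b = d) \/ (a = d /\ b = c).
Proof.
move=> abcd; have : a \in [:: c; d] by rewrite -(perm_mem abcd) mem_head.
rewrite !inE => /orP[/eqP ac | /eqP ad]; [left | right]; split=> //.
  by move: abcd; rewrite ac perm_cons => /perm_small_eq-/(_ isT) [].
move: abcd; rewrite ad perm_sym -(perm_rot 1) /= perm_cons.
by move=> /perm_small_eq-/(_ isT) [].
Qed.

Lemma fixed_permuted_triple (L : fieldType) (phi : {rmorphism L -> L}) (x y z : L) :
  perm_eq [:: phi x; phi y; phi z] [:: x; y; z] -> [\/ phi x = x, phi y = y | phi z = z] ->
  x * phi x + y * phi y + z * phi z = x * y + x * z + y * z ->
  (x + y + z) ^+ 2 = 3 * (x * y + x * z + y * z).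
Proof.
have rot u v w : perm_eq [:: phi u; phi v; phi w] [:: u; v; w] ->
    perm_eq [:: phi v; phi w; phi u] [:: v; w; u].
  by rewrite -(perm_rot 1) perm_sym -(perm_rot 1) perm_sym.
wlog fx : x y z / phi x = x.
  move=> wlog_fx xyz [fx | fy | fz] Hs.
  - by apply: (wlog_fx x y z fx xyz) => //; constructor 1.
  - have Hs' : y * phi y + z * phi z + x * phi x = y * z + y * x + z * x.
      by transitivity (x * phi x + y * phi y + z * phi z); [ring | rewrite Hs; ring].
    have E : (y + z + x) ^+ 2 = 3 * (y * z + y * x + z * x).
      by apply: (wlog_fx y z x fy (rot _ _ _ xyz)) => //; constructor 1.
    by transitivity ((y + z + x) ^+ 2); [ring | rewrite E; ring].
  - have Hs' : z * phi z + x * phi x + y * phi y = z * x + z * y + x * y.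
      by transitivity (x * phi x + y * phi y + z * phi z); [ring | rewrite Hs; ring].
    have E : (z + x + y) ^+ 2 = 3 * (z * x + z * y + x * y).
      by apply: (wlog_fx z x y fz (rot _ _ _ (rot _ _ _ xyz))) => //; constructor 1.
    by transitivity ((z + x + y) ^+ 2); [ring | rewrite E; ring].
move=> xyz _; rewrite fx.
have [[fy fz]|[fy fz]] : (phi y = y /\ phi z = z) \/ (phi y = z /\ phi z = y).
  by apply: perm_eq_pair; rewrite -(perm_cons x) -{1}fx.
  rewrite fy fz => Hs.
  transitivity (x * x + y * y + z * z + 2 * (x * y + x * z + y * z)); first by ring.
  by rewrite Hs; ring.
rewrite fy fz => Hs.
have /eqP : (x - y) * (x - z) = 0.
  transitivity (x * x + y * z + z * y - (x * y + x * z + y * z)); first by ring.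
  by rewrite Hs subrr.
have all_eq : x = y -> y = z -> (x + y + z) ^+ 2 = 3 * (x * y + x * z + y * z).
  by move=> -> ->; ring.
rewrite mulf_eq0 !subr_eq0 => /orP[/eqP xy | /eqP xz].
  by apply: all_eq => //; rewrite -fy -xy fx.
by apply: all_eq; rewrite -fz -xz fx.
Qed.

Section FixedField.
Variables (F : fieldType) (L : fieldExtType F) (phi : {rmorphism L -> L}).
Hypothesis phi_F : forall c : F, phi c%:A = c%:A.

Lemma perm_phi_prod_XsubC (q : {poly F}) (ts : seq L) :
  map_poly (in_alg L) q = \prod_(t <- ts) ('X - t%:P) -> perm_eq (map phi ts) ts.
Proof.
move=> qts; apply: prod_XsubC_eq; rewrite prod_map_poly -qts -map_poly_comp.
by apply: eq_map_poly => c /=; rewrite phi_F.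
Qed.

Variables (a0 a1 a2 : L) (P Q R : F).
Hypotheses (hP : P4 a0 a1 a2 = P%:A) (hQ : Q4 a0 a1 a2 = Q%:A) (hR : R4 a0 a1 a2 = R%:A).
Local Notation r i := (nth 0 (roots4 a0 a1 a2) i).
Local Notation t k := (resolvent_root a0 a1 a2 k).

Lemma map_in_alg_resolvent :
  map_poly (in_alg L) (resolvent P Q R) = \prod_(z <- resolvent_roots a0 a1 a2) ('X - z%:P).
Proof. by rewrite map_resolvent prod_resolvent_roots hP hQ hR. Qed.

Lemma map_in_alg_quartic :
  map_poly (in_alg L) (depressed_quartic P Q R) = \prod_(z <- roots4 a0 a1 a2) ('X - z%:P).
Proof. by rewrite map_depressed_quartic prod_roots4 hP hQ hR. Qed.

Lemma phi_roots4 x : x \in roots4 a0 a1 a2 -> phi x \in roots4 a0 a1 a2.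
Proof.
have /perm_mem E := perm_phi_prod_XsubC map_in_alg_quartic.
by move=> x_r; rewrite -E map_f.
Qed.

Hypothesis fixed_F : forall x, phi x = x -> exists c : F, x = c%:A.

Lemma no_fixed_resolvent_root_of_noncube :
  P ^+ 2 + 12 * R = 0 -> (forall u : F, u ^+ 3 != 8 * P ^+ 3 + 27 * Q ^+ 2) ->
  forall k, (k < 3)%N -> phi (t k) != t k.
Proof.
move=> K0 noncube k k3; apply/eqP => /fixed_F[y ty].
have : root (map_poly (in_alg L) (resolvent P Q R)) (t k).
  by rewrite map_in_alg_resolvent root_prod_XsubC; apply/mapP; exists k; rewrite ?mem_iota.
rewrite ty rootE horner_map fmorph_eq0 => /eqP res_y.
have := resolvent_cube P Q R y; rewrite res_y K0 !mulr0 mul0r subr0 => /esym/eqP.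
by rewrite subr_eq0 (negbTE (noncube _)).
Qed.

Lemma no_fixed_resolvent_root_of_twisted_sum :
  P ^+ 2 + 12 * R != 0 ->
  t 0 * phi (t 0) + t 1 * phi (t 1) + t 2 * phi (t 2) = (P ^+ 2 - 4 * R)%:A ->
  forall k, (k < 3)%N -> phi (t k) != t k.
Proof.
move=> K0 twisted k k3; apply/eqP => fixed.
have perm_t : perm_eq [:: phi (t 0); phi (t 1); phi (t 2)] [:: t 0; t 1; t 2].
  by have := perm_phi_prod_XsubC map_in_alg_resolvent; rewrite /resolvent_roots.
have fixed3 : [\/ phi (t 0) = t 0, phi (t 1) = t 1 | phi (t 2) = t 2].
  by case: k k3 fixed => [|[|[|]]] // _ ->; [constructor 1 | constructor 2 | constructor 3].
have e2_t : t 0 * t 1 + t 0 * t 2 + t 1 * t 2 = (P ^+ 2 - 4 * R)%:A.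
  by rewrite resolvent_roots_e2 hP hR -!in_algE !(rmorphB, rmorphM, rmorphXn, rmorph_nat).
have := fixed_permuted_triple perm_t fixed3; rewrite twisted e2_t => /(_ erefl).
rewrite resolvent_roots_sum hP -!in_algE !(rmorphB, rmorphM, rmorphXn, rmorph_nat) => E.
have : in_alg L (P ^+ 2 + 12 * R) == 0.
  rewrite !(rmorphD, rmorphM, rmorphXn, rmorph_nat); apply/eqP.
  transitivity ((- (2 * in_alg L P)) ^+ 2 - 3 * (in_alg L P ^+ 2 - 4 * in_alg L R)); first by ring.
  by rewrite E subrr.
by rewrite fmorph_eq0 (negbTE K0).
Qed.

Lemma depressed_quartic_simple_root :
  (forall k, (k < 3)%N -> phi (t k) != t k) ->
  exists2 y : F, root (depressed_quartic P Q R) y & ~~ root (depressed_quartic P Q R)^`() y.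
Proof.
move=> no_fixed; pose s i := index (phi (r i)) (roots4 a0 a1 a2).
have r_in i : (i < 4)%N -> r i \in roots4 a0 a1 a2 by move=> i4; rewrite mem_nth.
have s4 i : (i < 4)%N -> (s i < 4)%N by move=> i4; rewrite index_mem phi_roots4 ?r_in.
have phi_r i : (i < 4)%N -> phi (r i) = r (s i) by move=> i4; rewrite nth_index ?phi_roots4 ?r_in.
have phi_t i j : (i < 4)%N -> (j < 4)%N -> i != j ->
    phi (t (pairing i j)) = (r (s i) + r (s j)) ^+ 2.
  by move=> i4 j4 ij; rewrite -sqr_add_roots4 // rmorphXn rmorphD /= !phi_r.
have [[i i4 sii] | [i [j [i4 j4 ij sij pij]]]] := fixed_point_or_stable_pairing s4; last first.
  by move: (no_fixed _ (pairing_lt3 i4 j4 ij)); rewrite phi_t // sqr_add_roots4 ?s4 // pij eqxx.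
have fix_i : phi (r i) = r i by rewrite phi_r // sii.
have [y ry] := fixed_F fix_i; exists y.
  have : root (map_poly (in_alg L) (depressed_quartic P Q R)) (r i).
    by rewrite map_in_alg_quartic root_prod_XsubC r_in.
  by rewrite ry rootE horner_map fmorph_eq0.
rewrite rootE -(fmorph_eq0 (in_alg L)) -horner_map -deriv_map /= -ry.
rewrite map_in_alg_quartic prod_roots4.
apply: deriv_quartic_roots4_neq0 => // j j4 ji; apply/eqP => rji.
have ij : i != j by rewrite eq_sym.
move: (no_fixed _ (pairing_lt3 i4 j4 ij)).
by rewrite -sqr_add_roots4 // rji rmorphXn rmorphD /= fix_i eqxx.
Qed.
End FixedField.

Lemma Fp_frobenius (p : nat) (L : fieldExtType 'F_p) : prime p ->
  exists phi : {rmorphism L -> L}, [/\ forall c : 'F_p, phi c%:A = c%:A,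
    forall x, phi x = x -> exists c : 'F_p, x = c%:A & forall x, phi x = x ^+ p].
Proof.
move=> p_pr; have pL : p \in [pchar L] by rewrite pchar_lalg pchar_Fp.
exists (pFrobenius_aut pL); split=> [c | x | x]; rewrite /= ?pFrobenius_autE //.
  by rewrite -in_algE -rmorphXn /= -{2}(expf_card c) card_Fp.
move=> xp; have : x \in (1%AS : {subfield L}).
  by rewrite Fermat's_little_theorem /= dimv1 expn1 card_Fp // xp.
by case/vlineP=> c ->; exists c.
Qed.

Lemma Fp_depressed_quartic_simple_root (p : nat) (P Q R : 'F_p) (S : nat -> 'F_p) :
  prime p ->
  S 0%N = 3 -> S 1%N = - (2 * P) -> S 2%N = 2 * P ^+ 2 + 8 * R ->
  (forall n, S n.+3 = - (2 * P) * S n.+2 + (4 * R - P ^+ 2) * S n.+1 + Q ^+ 2 * S n) ->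
  (P ^+ 2 + 12 * R = 0 /\ (forall u : 'F_p, u ^+ 3 != 8 * P ^+ 3 + 27 * Q ^+ 2)) \/
  (P ^+ 2 + 12 * R != 0 /\ S p.+1 = P ^+ 2 - 4 * R) ->
  exists2 y, root (depressed_quartic P Q R) y & ~~ root (depressed_quartic P Q R)^`() y.
Proof.
move=> p_pr S0 S1 S2 Srec cond.
have dq_monic : depressed_quartic P Q R \is monic.
  by rewrite monicE lead_coefE polyseq_depressed_quartic.
have [L [rs Hrs _]] := FinSplittingFieldFor (monic_neq0 dq_monic).
move: Hrs; rewrite eqp_monic ?map_monic ?monic_prod_XsubC // => /eqP.
rewrite map_depressed_quartic => /roots_of_depressed_quartic[a0 [a1 [a2 [_ hP hQ hR]]]].
have [phi [phi_F fixed_F phiE]] := Fp_frobenius L p_pr.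
apply: (depressed_quartic_simple_root phi_F hP hQ hR fixed_F).
case: cond => [[K0 noncube] | [K0 Sp]].
  exact: no_fixed_resolvent_root_of_noncube hP hQ hR fixed_F K0 noncube.
apply: (no_fixed_resolvent_root_of_twisted_sum phi_F hP hQ hR K0).
rewrite !phiE -!exprS -(resolvent_roots_power_sum (S := fun n => in_alg L (S n))) /= ?Sp //.
- by rewrite S0 -in_algE rmorph_nat.
- by rewrite S1 hP -in_algE !(rmorph_nat, rmorphN, rmorphM).
- by rewrite S2 hP hR -in_algE !(rmorph_nat, rmorphD, rmorphXn, rmorphM).
- move=> n; rewrite Srec hP hQ hR -in_algE.
  by rewrite !(rmorph_nat, rmorphN, rmorphB, rmorphD, rmorphXn, rmorphM).
Qed.

(** * Reduction modulo p *)

Lemma s_seq_rec (a c d e : int) n :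
  s_seq a c d e n.+3 = - (2 * a * c) * s_seq a c d e n.+2
    + (4 * a ^+ 3 * e - a ^+ 2 * c ^+ 2) * s_seq a c d e n.+1
    + a ^+ 4 * d ^+ 2 * s_seq a c d e n.
Proof.
by rewrite /s_seq /=; case: (s_triple a c d e n) => [[x y] z].
Qed.

Definition quartic_poly (a b c d e : int) : {poly int} :=
  a%:P * 'X^4 + b%:P * 'X^3 + c%:P * 'X^2 + d%:P * 'X + e%:P.

Lemma horner_quartic_poly (a b c d e x : int) :
  (quartic_poly a b c d e).[x] = quartic a b c d e x 1.
Proof. by rewrite /quartic_poly /quartic !hornerE; ring. Qed.

Lemma deriv_quartic_poly (a b c d e x : int) :
  (quartic_poly a b c d e)^`().[x] = 4 * a * x ^+ 3 + 3 * b * x ^+ 2 + 2 * c * x + d.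
Proof. by rewrite /quartic_poly !derivE !hornerE /=; ring. Qed.

Section QuarticModP.
Variables (a b c d e : int) (p : nat).
Hypothesis p_pr : prime p.
Local Notation P := ((a * c)%:~R : 'F_p).
Local Notation Q := ((a ^+ 2 * d)%:~R : 'F_p).
Local Notation R := ((a ^+ 3 * e)%:~R : 'F_p).
Local Notation S n := ((s_seq a c d e n)%:~R : 'F_p).

Lemma dvdz_Fp (z : int) : (p%:Z %| z)%Z = ((z%:~R : 'F_p) == 0).
Proof. exact: dvdz_pcharf (pchar_Fp p_pr) z. Qed.

Lemma Fp_s_seq_rec :
  [/\ S 0%N = 3, S 1%N = - (2 * P), S 2%N = 2 * P ^+ 2 + 8 * R &
   forall n, S n.+3 = - (2 * P) * S n.+2 + (4 * R - P ^+ 2) * S n.+1 + Q ^+ 2 * S n].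
Proof.
split=> [|||n]; rewrite ?s_seq_rec /s_seq /=;
  by rewrite !(rmorph_nat, rmorphN, rmorphB, rmorphD, rmorphXn, rmorphM); ring.
Qed.

Lemma Fp_conditions :
  ((p %% 3)%N = 1%N
     /\ (p%:Z %| a ^+ 2 * c ^+ 2 + 12 * a ^+ 3 * e)%Z
     /\ ~ cubic_residue p (8 * a ^+ 3 * c ^+ 3 + 27 * a ^+ 4 * d ^+ 2))
  \/ (~~ (p%:Z %| a ^+ 2 * c ^+ 2 + 12 * a ^+ 3 * e)%Z
     /\ (p%:Z %| s_seq a c d e p.+1 - (a ^+ 2 * c ^+ 2 - 4 * a ^+ 3 * e))%Z) ->
  (a%:~R : 'F_p) != 0 /\
  ((P ^+ 2 + 12 * R = 0 /\ (forall u : 'F_p, u ^+ 3 != 8 * P ^+ 3 + 27 * Q ^+ 2))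
   \/ (P ^+ 2 + 12 * R != 0 /\ S p.+1 = P ^+ 2 - 4 * R)).
Proof.
have EK : ((a ^+ 2 * c ^+ 2 + 12 * a ^+ 3 * e)%:~R : 'F_p) = P ^+ 2 + 12 * R.
  by rewrite !(rmorph_nat, rmorphD, rmorphXn, rmorphM); ring.
have EC : ((8 * a ^+ 3 * c ^+ 3 + 27 * a ^+ 4 * d ^+ 2)%:~R : 'F_p) = 8 * P ^+ 3 + 27 * Q ^+ 2.
  by rewrite !(rmorph_nat, rmorphD, rmorphXn, rmorphM); ring.
have E4 : ((a ^+ 2 * c ^+ 2 - 4 * a ^+ 3 * e)%:~R : 'F_p) = P ^+ 2 - 4 * R.
  by rewrite !(rmorph_nat, rmorphB, rmorphXn, rmorphM); ring.
have pa_dvd : (p%:Z %| a)%Z -> (p%:Z %| a ^+ 2 * c ^+ 2 + 12 * a ^+ 3 * e)%Z /\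
    (p%:Z %| 8 * a ^+ 3 * c ^+ 3 + 27 * a ^+ 4 * d ^+ 2)%Z.
  move=> pa; have pa_k k : (0 < k)%N -> (p%:Z %| a ^+ k)%Z by move=> k0; exact: dvdz_exp.
  have pa_mk m k : (0 < k)%N -> (p%:Z %| m * a ^+ k)%Z by move=> k0; exact/dvdz_mull/pa_k.
  split; first exact: rpredD (dvdz_mulr _ (pa_k 2%N isT)) (dvdz_mulr _ (pa_mk 12 3%N isT)).
  exact: rpredD (dvdz_mulr _ (pa_mk 8 3%N isT)) (dvdz_mulr _ (pa_mk 27 4%N isT)).
case=> [[_ [K0 noncube]] | [K0 Sp]]; split.
- rewrite -dvdz_Fp; apply: contra_notN noncube => /pa_dvd[_ pt].
  by exists 0; rewrite expr0n sub0r rpredN.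
- left; split; first by apply/eqP; rewrite -EK -dvdz_Fp.
  move=> u; apply/eqP => u3; apply: noncube; exists (val u)%:Z.
  have uE : ((val u)%:Z)%:~R = u :> 'F_p := natr_Zp u.
  by rewrite dvdz_Fp intrB EC -u3 rmorphXn /= uE subrr.
- by rewrite -dvdz_Fp; apply: contraNN K0 => /pa_dvd[].
- by right; split; [rewrite -EK -dvdz_Fp | apply/eqP; rewrite -E4 -subr_eq0 -intrB -dvdz_Fp].
Qed.

Lemma quartic_poly_simple_root_mod_p (y : 'F_p) : (p%:Z %| b)%Z -> (a%:~R : 'F_p) != 0 ->
  root (depressed_quartic P Q R) y -> ~~ root (depressed_quartic P Q R)^`() y ->
  exists2 x : int, (p%:Z %| (quartic_poly a b c d e).[x])%Z
    & ~~ (p%:Z %| (quartic_poly a b c d e)^`().[x])%Z.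
Proof.
rewrite dvdz_Fp => /eqP b0 a0 hy h'y; set A : 'F_p := a%:~R in a0.
have [x yE] : exists x : int, y = A * x%:~R.
  by exists (val (y / A))%:Z; rewrite [_%:~R]natr_Zp mulrC divfK.
exists x; rewrite dvdz_Fp.
(* With [b = 0] in [F_p], [y = a x] turns [a^3 g(x)] and [a^2 g'(x)] into [h(y)] and [h'(y)]. *)
- have : A ^+ 3 * ((quartic_poly a b c d e).[x])%:~R = (depressed_quartic P Q R).[y].
    rewrite horner_quartic_poly horner_depressed_quartic yE /quartic.
    by rewrite !(rmorph1, rmorph_nat, rmorphD, rmorphM, rmorphXn) /= b0 -/A; ring.
  by rewrite (rootP hy) => /eqP; rewrite mulf_eq0 expf_eq0 (negbTE a0) andbF.
- have : A ^+ 2 * ((quartic_poly a b c d e)^`().[x])%:~R = (depressed_quartic P Q R)^`().[y].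
    rewrite deriv_quartic_poly deriv_depressed_quartic yE.
    by rewrite !(rmorph1, rmorph_nat, rmorphD, rmorphM, rmorphXn) /= b0 -/A; ring.
  by move=> E; apply: contra h'y => /eqP g'0; rewrite rootE -E g'0 mulr0.
Qed.
End QuarticModP.

Theorem theorem5p6 (a b c d e : int) (p : nat) :
  a != 0 -> b != 0 -> prime p -> (3 < p)%N -> (p%:Z %| b)%Z ->
  ( ((p %% 3)%N = 1%N
       /\ (p%:Z %| a ^+ 2 * c ^+ 2 + 12 * a ^+ 3 * e)%Z
       /\ ~ cubic_residue p (8 * a ^+ 3 * c ^+ 3 + 27 * a ^+ 4 * d ^+ 2))
    \/
    (~~ (p%:Z %| a ^+ 2 * c ^+ 2 + 12 * a ^+ 3 * e)%Z
       /\ (p%:Z %| s_seq a c d e p.+1 - (a ^+ 2 * c ^+ 2 - 4 * a ^+ 3 * e))%Z) ) ->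
  dense_in_Qp p (RF a b c d e).
Proof.
move=> _ _ p_pr _ pb cond.
have [a_p Fcond] := Fp_conditions p_pr cond.
have [S0 S1 S2 Srec] := Fp_s_seq_rec a c d e p.
have [y hy h'y] := Fp_depressed_quartic_simple_root p_pr S0 S1 S2 Srec Fcond.
have [x gx g'x] := quartic_poly_simple_root_mod_p p_pr pb a_p hy h'y.
move=> q k; have [_ [[x1 [x2 [g2 ->]]] close]] := dense_horner_ratios p_pr gx g'x q k.
by eexists; split; [exists x1, 1, x2, 1; rewrite -!horner_quartic_poly | exact: close].
Qed.
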